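(* Let $\delta^{*}_{1/2}$ be the decision rule \[ \delta^{*}_{1/2}(\mathbf{y},u)=\begin{cases}1 & \text{if } \sum_{i=1}^{n} w_i^{*} y_i > C^{*},\\ 0 & \text{if } \sum_{i=1}^{n} w_i^{*} y_i < C^{*},\\ u & \text{if } \sum_{i=1}^{n} w_i^{*} y_i = C^{*},\end{cases} \qquad w_i^{*}=2\log\!\left(\frac{\gamma_i}{1-\gamma_i}\right),\quad C^{*}=\sum_{i=1}^{n}\frac{w_i^{*}}{2}. \] This is the Bayes decision rule for the prior $P(\theta=1)=c=\tfrac12$, for which $\log\frac{1-c}{c}=0$. Then $\delta^{*}_{1/2}$ has constant risk in $\theta$ and is a minimax decision rule.
   Context: The setting is a crowdsourcing problem with known expert accuracies. The unknown quantity is $\theta\in\{0,1\}$, and the observations are expert opinions $\mathbf{Y}=(Y_1,\ldots,Y_n)\in\{0,1\}^n$ together with a fair coin flip $U\sim\text{Bernoulli}(1/2)$ that is independent of $\mathbf{Y}$. The following assumptions hold: - $Y_1,\ldots,Y_n$ are independent conditionally on $\theta$. - $\gamma_i:=P(Y_i=1\mid\theta=1)=P(Y_i=0\mid\theta=0)$ is known for each $i$. - $n$ is odd. A decision rule is a map $\delta:\{0,1\}^n\times\{0,1\}\to\{0,1\}$. The loss is $L(\theta,a)=\mathbb{I}(\theta\neq a)$, and the risk is $R(\delta,\theta)=\mathbb{E}[L(\delta(\mathbf{Y},U),\theta)\mid\theta]$. A rule $\delta^*$ is minimax if $\sup_\theta R(\delta^*,\theta)=\inf_\delta\sup_\theta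 R(\delta,\theta)$. *)

From HB Require Import structures.
From mathcomp Require Import all_boot all_order all_algebra.
From mathcomp Require Import reals exp.
Set Implicit Arguments. Unset Strict Implicit. Unset Printing Implicit Defensive.
Import Order.TTheory GRing.Theory Num.Theory.
Local Open Scope ring_scope.

Section Crowd.
Variables (R : realType) (n : nat) (gamma : 'I_n -> R).

(* observation vector y in {0,1}^n, encoded as booleans (true = 1) *)
Definition obs := {ffun 'I_n -> bool}.

Definition rule := obs -> bool -> bool.

Definition lik (th : bool) (y : obs) : R :=
  \prod_(i < n) (if y i == th then gamma i else 1 - gamma i).

(* R(delta, theta) = E[ 1(delta(Y,U) <> theta) | theta ], U ~ Bernoulli(1/2)
   independent of Y *)
Definition risk (delta : rule) (th : bool) : R :=
  \sum_(y : obs) \sum_(u : bool)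
     lik th y * (1 / 2) * (if delta y u != th then 1 else 0).

Definition wstar (i : 'I_n) : R := 2 * ln (gamma i / (1 - gamma i)).

Definition Cstar : R := \sum_(i < n) wstar i / 2.

Definition delta_star : rule := fun y u =>
  let s := \sum_(i < n) wstar i * (y i : nat)%:R in
  if Cstar < s then true else if s < Cstar then false else u.

End Crowd.

(* delta* compares the weighted vote with C*, and the difference of the two
   is exactly the log-likelihood ratio ln P(y | 1) - ln P(y | 0); so delta* is
   the maximum-likelihood rule with ties broken by the coin, i.e. the Bayes
   rule for the uniform prior, and it minimises R(d, 0) + R(d, 1). Flipping
   every vote and the coin swaps the roles of theta = 0 and theta = 1 and
   commutes with delta*, so its risk is constant. A Bayes rule with constant
   risk is minimax, because a maximum dominates the average. *)
From Pilot Require Import Defs.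
From HB Require Import structures.
From mathcomp Require Import all_boot all_order all_algebra.
From mathcomp Require Import reals exp.
From mathcomp Require Import ring lra.
Set Implicit Arguments. Unset Strict Implicit. Unset Printing Implicit Defensive.
Import Order.TTheory GRing.Theory Num.Theory.
Local Open Scope ring_scope.

Lemma ln_prod (R : realType) (I : Type) (r : seq I) (P : pred I) (F : I -> R) :
  (forall i, P i -> 0 < F i) ->
  ln (\prod_(i <- r | P i) F i) = \sum_(i <- r | P i) ln (F i).
Proof.
move=> F_gt0.
suff [] : 0 < \prod_(i <- r | P i) F i /\
          ln (\prod_(i <- r | P i) F i) = \sum_(i <- r | P i) ln (F i) by [].
apply: (big_rec2 (fun x s => 0 < x /\ ln x = s)); first by rewrite ln1.
move=> i x s Pi [x_gt0 <-]; split; first by rewrite mulr_gt0 ?F_gt0.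
by rewrite lnM // posrE ?F_gt0.
Qed.

Lemma le_max_of_double_le (R : realFieldType) (r a b : R) :
  r + r <= a + b -> r <= Num.max a b.
Proof. by move=> rab; rewrite le_max; case: (leP b a) => ba; apply/orP; [left|right]; lra. Qed.

Section Risks.
Variables (R : realType) (n : nat) (gamma : 'I_n -> R).

Notation lik := (lik gamma).
Notation risk := (risk gamma).

Definition ml_rule : rule n := fun y u =>
  if lik false y < lik true y then true
  else if lik true y < lik false y then false else u.

Lemma eq_risk (d d' : rule n) : d =2 d' -> risk d =1 risk d'.
Proof. by move=> dd' th; apply: eq_bigr => y _; apply: eq_bigr => u _; rewrite dd'. Qed.

Definition compl (y : obs n) : obs n := [ffun i => ~~ y i].

Lemma compl_inj : injective compl.
Proof.
move=> y y' /ffunP yy'; apply/ffunP => i.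
by move: (yy' i); rewrite !ffunE => /negb_inj.
Qed.

Lemma lik_compl th y : lik th (compl y) = lik (~~ th) y.
Proof. by apply: eq_bigr => i _; rewrite ffunE; case: (y i); case: th. Qed.

Lemma ml_rule_compl y u : ml_rule (compl y) (~~ u) = ~~ ml_rule y u.
Proof. by rewrite /ml_rule !lik_compl /=; case: ltgtP. Qed.

Lemma risk_true_compl (d : rule n) :
  (forall y u, d (compl y) (~~ u) = ~~ d y u) -> risk d true = risk d false.
Proof.
move=> d_compl; rewrite /Defs.risk (reindex_inj compl_inj); apply: eq_bigr => y _.
rewrite (reindex_inj (can_inj negbK)); apply: eq_bigr => u _.
by rewrite lik_compl d_compl; case: (d y u).
Qed.

Lemma risk_false_add_true (d : rule n) : risk d false + risk d true =
  \sum_(y : obs n) \sum_(u : bool) (if d y u then lik false y else lik true y) / 2.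
Proof.
rewrite /Defs.risk -big_split; apply: eq_bigr => y _.
rewrite -big_split; apply: eq_bigr => u _.
by case: (d y u) => /=; rewrite ?mulr1 ?mulr0 ?addr0 ?add0r mul1r.
Qed.

Lemma ml_rule_bayes (d : rule n) :
  risk ml_rule false + risk ml_rule true <= risk d false + risk d true.
Proof.
rewrite !risk_false_add_true; apply: ler_sum => y _; apply: ler_sum => u _.
rewrite ler_pM2r ?invr_gt0 // /ml_rule.
by case: (d y u); case: ltgtP => // l01; case: u => //; rewrite ?l01 // ltW.
Qed.

Hypothesis gamma_in01 : forall i, 0 < gamma i < 1.

Lemma lik_factor_gt0 (b : bool) i : 0 < (if b then gamma i else 1 - gamma i).
Proof. by have /andP[] := gamma_in01 i; case: b; lra. Qed.

Lemma lik_gt0 th y : 0 < lik th y.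
Proof. by apply: prodr_gt0 => i _; apply: lik_factor_gt0. Qed.

Lemma vote_sub_Cstar (y : obs n) :
  \sum_(i < n) wstar gamma i * (y i : nat)%:R - Cstar gamma = ln (lik true y) - ln (lik false y).
Proof.
have factor_gt0 th i := lik_factor_gt0 (y i == th) i.
rewrite /Defs.lik !ln_prod // /Cstar -!sumrB; apply: eq_bigr => i _.
have /andP[g_gt0 g_lt1] := gamma_in01 i.
rewrite /wstar ln_div ?posrE; [|lra|lra].
by case: (y i) => /=; rewrite ?mulr1 ?mulr0; field.
Qed.

Lemma delta_star_ml : delta_star gamma =2 ml_rule.
Proof.
move=> y u; have := vote_sub_Cstar y; rewrite /delta_star /ml_rule.
set s := \sum_(i < n) _ => s_sub_C.
have lt_ln a b : (ln (lik a y) < ln (lik b y)) = (lik a y < lik b y).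
  by rewrite ltr_ln ?posrE ?lik_gt0.
rewrite -!lt_ln; have -> : (Cstar gamma < s) = (ln (lik false y) < ln (lik true y)).
  by apply/idP/idP; lra.
suff -> : (s < Cstar gamma) = (ln (lik true y) < ln (lik false y)) by [].
by apply/idP/idP; lra.
Qed.

End Risks.

Theorem theorem3 (R : realType) (n : nat) (gamma : 'I_n -> R) :
  odd n ->
  (forall i, 0 < gamma i < 1) ->
  (forall th th' : bool,
      risk gamma (delta_star gamma) th = risk gamma (delta_star gamma) th') /\
  (forall delta : rule n,
      Num.max (risk gamma (delta_star gamma) false)
              (risk gamma (delta_star gamma) true)
      <= Num.max (risk gamma delta false) (risk gamma delta true)).
Proof.
move=> _ gamma_in01.
have const_risk : risk gamma (ml_rule gamma) true = risk gamma (ml_rule gamma) false.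
  exact/risk_true_compl/ml_rule_compl.
have risk_star th : risk gamma (delta_star gamma) th = risk gamma (ml_rule gamma) false.
  by rewrite (eq_risk gamma (delta_star_ml gamma_in01)); case: th; [exact: const_risk|].
split=> [th th'|d]; first by rewrite (risk_star th) (risk_star th').
rewrite (risk_star false) (risk_star true) maxxx; apply: le_max_of_double_le.
by rewrite -[X in _ + X <= _]const_risk ml_rule_bayes.
Qed.
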